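(* Let $a\le r$ be positive integers. Then there are infinitely many $n\ge r^{\Omega(r)}$ (each a multiple of $r$) such that, for any desired $\epsilon\in(0,0.5)$ and any positive integer $h$ with $hr\ge\Omega\!\left(\frac{n^{2/3}}{\epsilon}\right)$ (and $\frac nr a+h<n$), there is an MR $(n,r,h,a)$-LRC over a field of size at most $n^{\frac{2h}{3}(1+\epsilon)}$.
   Context: Definition: let $\ell$ be a prime power, $a,g,r,h$ positive integers with $ga+h<gr$, $n=gr$, $k=n-ga-h$. An MR (maximally recoverable) $(n,r,h,a)_\ell$-LRC is an $[n,k]$ linear code over $\mathbb{F}_\ell$ with a parity-check matrix $H$ of the block form whose first $ga$ rows are block diagonal with diagonal blocks $A_1,\dots,A_g$ (each $a\times r$, coordinates split into $g$ consecutive groups of size $r$) and whose last $h$ rows are $(D_1|\cdots|D_g)$ with each $D_i$ of size $h\times r$, such that (i) each $A_i$ generates an $[r,a,r-a+1]_\ell$ MDS code, and (ii) every set of $ag+h$ columns of $H$ consisting of any $a$ columns from each group together with any $h$ further columns is linearly independent over $\mathbb{F}_\ell$. ''Over a field of size $\ell$'' means an MR $(n,r,h,a)_\ell$-LRC. $\Omega(\cdot)$ is the usual asymptotic notation (lower bound up to an absolute positive constant). *)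

From Stdlib Require Import Reals.
From mathcomp Require Import all_boot all_order all_algebra.
Set Implicit Arguments. Unset Strict Implicit. Unset Printing Implicit Defensive.
Import GRing.Theory.
Local Open Scope ring_scope.

Definition wt (F : fieldType) (r : nat) (v : 'rV[F]_r) : nat :=
  #|[set j : 'I_r | v ord0 j != 0]|.

Definition generates_MDS (F : fieldType) (a r : nat) (A : 'M[F]_(a, r)) : Prop :=
  \rank A = a /\
  (forall x : 'rV[F]_a, x != 0 -> (r - a + 1 <= wt (x *m A))%N) /\
  (exists x : 'rV[F]_a, x != 0 /\ wt (x *m A) = (r - a + 1)%N).

(* Entries of the parity-check matrix
      H = [ diag(A_1,...,A_g) ; (D_1 | ... | D_g) ]
   Rows are indexed by ('I_g * 'I_a) + 'I_h (the g blocks of a local rows, then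
   the h global rows); columns by 'I_g * 'I_r (group i, position j in the group),
   i.e. the n = g r coordinates split into g consecutive groups of size r. *)
Definition pcm (F : fieldType) (g r a h : nat)
    (A : 'I_g -> 'M[F]_(a, r)) (D : 'I_g -> 'M[F]_(h, r))
    (row : ('I_g * 'I_a) + 'I_h) (col : 'I_g * 'I_r) : F :=
  match row with
  | inl (i', p) => if i' == col.1 then A col.1 p col.2 else 0
  | inr q => D col.1 q col.2
  end.

Definition cols_indep (F : fieldType) (rowT colT : finType)
    (H : rowT -> colT -> F) (U : {set colT}) : Prop :=
  forall lam : colT -> F,
    (forall x : rowT, \sum_(c in U) lam c * H x c = 0) ->
    forall c, c \in U -> lam c = 0.

Definition is_MR_LRC (F : fieldType) (g r h a : nat)
    (A : 'I_g -> 'M[F]_(a, r)) (D : 'I_g -> 'M[F]_(h, r)) : Prop :=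
  (forall i, generates_MDS (A i)) /\
  (forall T S : {set 'I_g * 'I_r},
      (forall i : 'I_g, #|[set c in T | c.1 == i]| = a) ->
      [disjoint T & S] -> #|S| = h ->
      cols_indep (pcm A D) (T :|: S)).

Definition MR_LRC (F : fieldType) (n r h a : nat) : Prop :=
  [&& (0 < a)%N, (0 < r)%N, (0 < h)%N, (0 < n %/ r)%N, (r %| n)%N &
      (n %/ r * a + h < n)%N] /\
      (exists (A : 'I_(n %/ r) -> 'M[F]_(a, r)) (D : 'I_(n %/ r) -> 'M[F]_(h, r)),
        is_MR_LRC A D).

(* Take n = m^3 with r | m and m >= 3 2^r r, and F = GF(2^k) with
   2^k <= m^(2h) < 2^(k+1).  Every local block is the a x r Vandermonde matrix
   on r distinct points of F, so at most a columns of one group never carry a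
   local dependency.  The h global rows are chosen greedily.  Call (T, S)
   admissible when T lies in the groups met by S and has at most a columns in
   each; if T u S is independent for every admissible pair with |S| = j, then
   for |S| = j+1 a dependency of T u S is determined by its value at one column
   of S, so the dependencies form at most a line and only a hyperplane of
   candidate rows fails to kill it.  There are at most C(n, j+1) 2^(r(j+1)) <
   |F| admissible pairs, so some row avoids all these hyperplanes.  An
   arbitrary MR test set T u S reduces to an admissible pair, since the
   columns of T in groups not met by S are forced to vanish locally. *)

From mathcomp Require Import all_boot all_order all_algebra all_field.
From Stdlib Require Import Reals Lra Classical.
(* Reals rebinds [^] on nat to [Nat.pow]; re-importing ssrnat restores [expn]. *)
From mathcomp Require Import ssrnat zify ring.
Import GRing.Theory.
Set Implicit Arguments. Unset Strict Implicit. Unset Printing Implicit Defensive.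

Lemma INR_expn (m e : nat) : INR (m ^ e) = (INR m ^ e)%R.
Proof. by elim: e => [|e IH]; rewrite ?expn0 // expnS mult_INR IH. Qed.

Lemma exp_pow (x : R) (n : nat) : (exp x ^ n = exp (INR n * x))%R.
Proof.
elim: n => [|n IH]; first by rewrite Rmult_0_l exp_0.
by rewrite -tech_pow_Rmult IH -exp_plus S_INR; congr exp; lra.
Qed.

(* [(1 + 1/x)^x <= e <= 3] *)
Lemma succ_expn_le (h : nat) : (h.+1 ^ h <= 3 * h ^ h)%N.
Proof.
case: h => [//|h]; apply/leP/INR_le.
rewrite mult_INR !INR_expn.
set x := INR h.+1.
have x_gt0 : (0 < x)%R by apply: lt_0_INR; lia.
have -> : INR h.+2 = (x * (1 + / x))%R.
  by rewrite S_INR -/x Rmult_plus_distr_l Rmult_1_r Rinv_r; lra.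
rewrite Rpow_mult_distr.
have : ((1 + / x) ^ h.+1 <= exp (/ x) ^ h.+1)%R.
  by apply: pow_incr; split; [have := Rinv_0_lt_compat x x_gt0; lra | exact: exp_ineq1_le].
rewrite exp_pow -/x Rinv_r; last lra.
have -> : INR 3 = 3%R by rewrite /=; lra.
have := exp_le_3; have := pow_lt x h.+1 x_gt0; nra.
Qed.

Lemma expn_self_le_fact (h : nat) : (h ^ h <= 3 ^ h * h`!)%N.
Proof.
elim: h => [//|h IH]; rewrite factS !expnS.
apply: leq_trans (leq_mul (leqnn h.+1) (succ_expn_le h)) _.
nia.
Qed.

Lemma ffact_leq_expn (n N m : nat) : (n <= N)%N -> (n ^_ m <= N ^ m)%N.
Proof.
move=> le_nN; elim: m => [|m IH]; first by rewrite ffactn0 expn0.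
by rewrite ffactnSr expnS mulnC leq_mul // (leq_trans (leq_subr m n)).
Qed.

Lemma bin_expn_fact_le (n Y h j : nat) : (j <= h)%N -> (h <= n * Y)%N ->
  ('C(n, j) * Y ^ j * h ^ h <= 3 ^ h * (n * Y) ^ h)%N.
Proof.
move=> le_jh le_h_nY.
have fact_h : (h`! <= j`! * (n * Y) ^ (h - j))%N.
  rewrite -(ffact_fact (leq_subr j h)) subKn // mulnC leq_mul2l.
  by rewrite ffact_leq_expn ?orbT.
have bin_j : ('C(n, j) * j`! <= n ^ j)%N by rewrite bin_ffact ffact_leq_expn.
apply: (@leq_trans ('C(n, j) * j`! * (3 ^ h * Y ^ j * (n * Y) ^ (h - j)))).
  have -> : ('C(n, j) * j`! * (3 ^ h * Y ^ j * (n * Y) ^ (h - j))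
            = 'C(n, j) * Y ^ j * (3 ^ h * (j`! * (n * Y) ^ (h - j))))%N by ring.
  by rewrite leq_mul2l (leq_trans (expn_self_le_fact h)) ?leq_mul2l ?fact_h ?orbT.
have -> : (3 ^ h * (n * Y) ^ h = n ^ j * (3 ^ h * Y ^ j * (n * Y) ^ (h - j)))%N.
  by rewrite -[in (n * Y) ^ h](subnKC le_jh) expnD expnMn; set d := (h - j)%N; ring.
exact: leq_mul.
Qed.

Lemma bin_expn_le_half (m r h j : nat) : (0 < r)%N -> (j < h)%N -> (h < m ^ 3)%N ->
  (2 * m ^ 2 <= h * r)%N -> (3 * 2 ^ r * r <= m)%N ->
  (2 * ('C(m ^ 3, j.+1) * 2 ^ (r * j.+1)) <= m ^ (2 * h))%N.
Proof.
move=> r_gt0 lt_jh lt_h_m3 hr_ge m_ge.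
set Y := (2 ^ r)%N.
have h_gt0 : (0 < h)%N by apply: leq_ltn_trans lt_jh.
have m3Y_le : (6 * m ^ 3 * Y <= m ^ 2 * h)%N.
  rewrite -(leq_pmul2r r_gt0).
  apply: (@leq_trans (m ^ 2 * (2 * m ^ 2))); last by rewrite -mulnA leq_mul2l hr_ge orbT.
  have -> : (6 * m ^ 3 * Y * r = 2 * m ^ 3 * (3 * Y * r))%N by ring.
  have -> : (m ^ 2 * (2 * m ^ 2) = 2 * m ^ 3 * m)%N by ring.
  by rewrite leq_mul2l m_ge orbT.
have hh_gt0 : (0 < h ^ h)%N by rewrite expn_gt0 h_gt0.
rewrite -(leq_pmul2r hh_gt0) (expnM m 2 h) -expnMn.
apply: (@leq_trans ((6 * m ^ 3 * Y) ^ h)); last by rewrite leq_exp2r.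
have -> : ((6 * m ^ 3 * Y) ^ h = 2 ^ h * (3 ^ h * (m ^ 3 * Y) ^ h))%N.
  by rewrite -!expnMn; congr (_ ^ _); ring.
rewrite expnM -mulnA leq_mul //; first by rewrite -{1}(expn1 2) leq_pexp2l.
apply: bin_expn_fact_le => //.
by apply: leq_trans (ltnW lt_h_m3) _; rewrite leq_pmulr // expn_gt0.
Qed.

Section Vandermonde.
Variables (F : fieldType) (r : nat) (x : 'rV[F]_r).
Local Open Scope ring_scope.
Hypothesis x_inj : injective (x ord0).

Lemma Vandermonde_rVpoly a (u : 'rV[F]_a) j :
  (u *m Vandermonde a x) ord0 j = (rVpoly u).[x ord0 j].
Proof.
rewrite mxE (horner_coef_wide _ (size_poly _ _)); apply: eq_bigr => i _.
by rewrite coef_rVpoly_ord mxE.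
Qed.

Definition zeros (v : 'rV[F]_r) : {set 'I_r} := [set j | v ord0 j == 0].

Lemma wt_zeros (v : 'rV[F]_r) : wt v = (r - #|zeros v|)%N.
Proof.
rewrite /wt cardsCs card_ord; congr (_ - _)%N.
by apply: eq_card => j; rewrite !inE negbK.
Qed.

Lemma card_roots_lt (p : {poly F}) :
  p != 0 -> (#|[set j | root p (x ord0 j)]| < size p)%N.
Proof.
move=> p_neq0.
have := @max_poly_roots _ p [seq x ord0 j | j <- enum [set j | root p (x ord0 j)]] p_neq0.
rewrite size_map -cardE; apply.
  by apply/allP => y /mapP [j]; rewrite mem_enum inE => ? ->.
by rewrite map_inj_uniq ?enum_uniq.
Qed.

Lemma Vandermonde_MDS a : (0 < a <= r)%N -> generates_MDS (Vandermonde a x).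
Proof.
case/andP=> a_gt0 le_ar.
have zerosE (u : 'rV_a) :
    zeros (u *m Vandermonde a x) = [set j | root (rVpoly u) (x ord0 j)].
  by apply/setP => j; rewrite !inE Vandermonde_rVpoly.
have wt_ge (u : 'rV_a) : u != 0 -> (r - a + 1 <= wt (u *m Vandermonde a x))%N.
  move=> u_neq0.
  have pu_neq0 : rVpoly u != 0.
    by apply: contra u_neq0 => /eqP pu0; rewrite -[u]rVpolyK pu0 linear0.
  have := leq_trans (card_roots_lt pu_neq0) (size_poly _ _).
  rewrite wt_zeros zerosE; move: #|_| => c; lia.
split; last split=> //.
  apply/eqP/inj_row_free => u uV0; apply/eqP/negPn/negP => /wt_ge.
  rewrite uV0 wt_zeros.
  have -> : zeros 0 = setT by apply/setP => j; rewrite /zeros !inE mxE eqxx.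
  rewrite cardsT card_ord subnn; lia.
set s := take a.-1 (enum 'I_r).
have s_uniq : uniq s by rewrite take_uniq ?enum_uniq.
have size_s : size s = a.-1 by rewrite size_takel // size_enum_ord; lia.
set P := \prod_(z <- map (x ord0) s) ('X - z%:P).
have size_P : size P = a by rewrite size_prod_XsubC size_map size_s; lia.
exists (poly_rV P).
have PK : rVpoly (poly_rV P : 'rV_a) = P by rewrite poly_rV_K ?size_P.
split.
  by apply/eqP => P0; move: size_P; rewrite -PK P0 linear0 size_poly0; lia.
rewrite wt_zeros zerosE PK.
have -> : [set j | root P (x ord0 j)] = [set j in s].
  by apply/setP => j; rewrite !inE root_prod_XsubC (mem_map x_inj).
rewrite cardsE (card_uniqP s_uniq) size_s; lia.
Qed.

Lemma Vandermonde_cols_free a (J : {set 'I_r}) (mu : 'I_r -> F) :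
  (#|J| <= a)%N -> (forall j, j \notin J -> mu j = 0) ->
  (forall p : 'I_a, \sum_j mu j * x ord0 j ^+ p = 0) -> forall j, mu j = 0.
Proof.
move=> card_J mu_supp mu_orth j0.
have [j0J|] := boolP (j0 \in J); last exact: mu_supp.
set L := \prod_(z <- [seq x ord0 j | j <- enum (J :\ j0)]) ('X - z%:P).
have size_L : (size L <= a)%N.
  by rewrite size_prod_XsubC size_map -cardE; move: card_J; rewrite (cardsD1 j0) j0J.
have rootL j : root L (x ord0 j) = (j \in J :\ j0).
  by rewrite root_prod_XsubC (mem_map x_inj) mem_enum.
have : \sum_j mu j * L.[x ord0 j] = 0.
  under eq_bigr do rewrite (horner_coef_wide _ size_L) mulr_sumr.
  rewrite exchange_big big1 //= => p _.
  transitivity (L`_p * \sum_j mu j * x ord0 j ^+ p); last by rewrite mu_orth mulr0.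
  by rewrite mulr_sumr; apply: eq_bigr => j _; rewrite mulrCA.
rewrite (bigD1 j0) //= big1 ?addr0 => [/eqP|j /negbTE j_neq0].
  by rewrite mulf_eq0 -/(root _ _) rootL setD11 orbF => /eqP.
have [jJ|/mu_supp -> ] := boolP (j \in J); last by rewrite mul0r.
by move/eqP: (rootL j); rewrite in_setD1 j_neq0 jJ => ->; rewrite mulr0.
Qed.

End Vandermonde.

Lemma card_bigcup_le (I T : finType) (P : {pred I}) (B : I -> {set T}) :
  (#|\bigcup_(i in P) B i| <= \sum_(i in P) #|B i|)%N.
Proof.
elim/big_rec2: _ => [|i s X _ IH]; first by rewrite cards0.
by apply: leq_trans (leq_card_setU _ _) _; rewrite leq_add2l.
Qed.

Lemma exists_notin_bigcup (I T : finType) (P : {pred I}) (B : I -> {set T}) :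
  (\sum_(i in P) #|B i| < #|T|)%N -> exists v, forall i, i \in P -> v \notin B i.
Proof.
move=> small; have /subsetPn [v _ vB] : ~~ ([set: T] \subset \bigcup_(i in P) B i).
  by apply/negP => /subset_leq_card; rewrite cardsT leqNgt (leq_ltn_trans (card_bigcup_le P B)).
by exists v => i iP; apply: contra vB => viB; apply/bigcupP; exists i.
Qed.

Section Hyperplane.
Variables (I : finType) (F : finFieldType).
Local Open Scope ring_scope.

Definition hyperplane (lam : I -> F) : {set {ffun I -> F}} :=
  [set v : {ffun I -> F} | \sum_c lam c * v c == 0].

Lemma card_hyperplane (lam : I -> F) (c0 : I) : lam c0 != 0 ->
  (#|F| * #|hyperplane lam| <= #|F| ^ #|I|)%N.
Proof.
move=> lam_c0; set H := hyperplane lam.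
pose shift (tv : F * {ffun I -> F}) := [ffun c => tv.2 c + (if c == c0 then tv.1 else 0)].
have sum_shift tv : \sum_c lam c * shift tv c = \sum_c lam c * tv.2 c + lam c0 * tv.1.
  under eq_bigr do rewrite ffunE mulrDr.
  rewrite big_split /=; congr (_ + _).
  by rewrite (bigD1 c0) //= eqxx big1 ?addr0 // => c /negbTE ->; rewrite mulr0.
have shift_inj : {in setX [set: F] H &, injective shift}.
  move=> [t v] [t' v']; rewrite !inE /= => /eqP Hv /eqP Hv' E.
  have /(mulfI lam_c0) tt' : lam c0 * t = lam c0 * t'.
    have := congr1 (fun w : {ffun I -> F} => \sum_c lam c * w c) E.
    by rewrite /= !sum_shift Hv Hv' !add0r.
  rewrite -{}tt' in E *; congr (_, _); apply/ffunP => c.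
  by have := congr1 (fun w : {ffun I -> F} => w c) E; rewrite /= !ffunE => /addIr.
have := subset_leq_card (subsetT (shift @: setX [set: F] H)).
by rewrite card_in_imset // cardsX !cardsT card_ffun.
Qed.

End Hyperplane.

Section GreedyRows.
Variables (F : finFieldType) (g r a : nat) (x : 'rV[F]_r).
Local Open Scope ring_scope.
Hypothesis x_inj : injective (x ord0).

Local Notation col := ('I_g * 'I_r)%type.
Local Notation row := {ffun col -> F}.

Definition orth (lam w : col -> F) := \sum_c lam c * w c = 0.

Definition local_row (i : 'I_g) (p : nat) (c : col) : F :=
  if i == c.1 then x ord0 c.2 ^+ p else 0.

(* [lam] is a linear dependency among the columns of the parity-check matrix
   whose local rows are the Vandermonde rows of [x] and whose global rows are
   [rows]. *)
Definition codeword (rows : seq row) (lam : col -> F) :=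
  (forall (i : 'I_g) (p : 'I_a), orth lam (local_row i p)) /\
  (forall w, w \in rows -> orth lam w).

Definition supported (U : {set col}) (lam : col -> F) := forall c, c \notin U -> lam c = 0.

Definition free_on (rows : seq row) (U : {set col}) :=
  forall lam, supported U lam -> codeword rows lam -> forall c, lam c = 0.

Definition groups (S : {set col}) : {set 'I_g} := [set c.1 | c in S].

Definition slice (U : {set col}) (i : 'I_g) : {set 'I_r} := [set j | (i, j) \in U].

Definition admissible (j : nat) (TS : {set col} * {set col}) :=
  [&& #|TS.2| == j, TS.1 \subset setX (groups TS.2) setT &
      [forall i, #|slice TS.1 i| <= a]%N].

Definition admissibly_free (rows : seq row) :=
  forall TS, admissible (size rows) TS -> free_on rows (TS.1 :|: TS.2).

Lemma card_slice (U : {set col}) i : #|slice U i| = #|[set c in U | c.1 == i]|.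
Proof.
have -> : [set c in U | c.1 == i] = pair i @: slice U i.
  apply/setP => -[i' j]; rewrite !inE /=; apply/andP/imsetP => [[ijU /eqP <-]|[j' j'U [-> ->]]].
    by exists j; rewrite ?inE.
  by move: j'U; rewrite inE.
by rewrite card_imset // => j j' [].
Qed.

Lemma orth_local_row lam i p :
  \sum_c lam c * local_row i p c = \sum_j lam (i, j) * x ord0 j ^+ p.
Proof.
transitivity (\sum_i' \sum_j lam (i', j) * local_row i p (i', j)).
  by rewrite pair_bigA; apply: eq_bigr => -[].
rewrite (bigD1 i) //= [X in _ + X]big1 ?addr0 => [|i' /negbTE i'i].
  by apply: eq_bigr => j _; rewrite /local_row eqxx.
by apply: big1 => j _; rewrite /local_row /= eq_sym i'i mulr0.
Qed.

Lemma codewordB rows lam mu k :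
  codeword rows lam -> codeword rows mu -> codeword rows (fun c => lam c - k * mu c).
Proof.
have orthB w : orth lam w -> orth mu w -> orth (fun c => lam c - k * mu c) w.
  rewrite /orth => lam_w mu_w.
  under eq_bigr do rewrite mulrBl -mulrA.
  by rewrite sumrB -mulr_sumr lam_w mu_w mulr0 subr0.
by move=> [lam_loc lam_rows] [mu_loc mu_rows]; split=> [i p|w w_rows]; apply: orthB; auto.
Qed.

Lemma codeword_slice_vanish rows U lam i :
  supported U lam -> codeword rows lam -> (#|slice U i| <= a)%N -> forall j, lam (i, j) = 0.
Proof.
move=> lam_U [lam_loc _] card_i.
apply: (@Vandermonde_cols_free _ _ _ x_inj _ _ (fun j => lam (i, j)) card_i) => [j|p].
  by rewrite inE => /lam_U.
by rewrite -orth_local_row; exact: lam_loc.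
Qed.

Lemma free_on_of_slices rows (U S : {set col}) :
  admissibly_free rows -> #|S| = size rows ->
  (forall i, #|slice (U :\: S) i| <= a)%N -> free_on rows U.
Proof.
move=> free_rows card_S card_slices lam lam_U lam_cw.
set T := [set t in U :\: S | t.1 \in groups S].
have lam_TS : supported (T :|: S) lam.
  move=> [i j]; rewrite !inE /= negb_or => /andP [t_notT t_notS].
  have [tU|] := boolP ((i, j) \in U); last exact: lam_U.
  have iS : i \notin groups S by move: t_notT; rewrite t_notS tU.
  apply: (codeword_slice_vanish lam_U lam_cw); apply: leq_trans (card_slices i).
  apply/eq_leq/eq_card => j'; rewrite !inE andb_idl // => ij'U.
  by apply: contra iS => ij'S; apply/imsetP; exists (i, j').
apply: (free_rows (T, S)) => //; apply/and3P; split => /=.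
- by rewrite card_S.
- by apply/subsetP => t; rewrite !inE => /andP [_ ->].
- apply/forallP => i; apply: leq_trans (card_slices i); apply: subset_leq_card.
  by apply/subsetP => j; rewrite !inE => /andP [].
Qed.

Lemma codeword_vanish_at rows TS c lam :
  admissibly_free rows -> admissible (size rows).+1 TS -> c \in TS.2 ->
  supported (TS.1 :|: TS.2) lam -> codeword rows lam -> lam c = 0 -> forall t, lam t = 0.
Proof.
case: TS => T S /= free_rows /and3P [/eqP card_S _ /forallP card_T] cS lam_TS lam_cw lam_c.
apply: (@free_on_of_slices rows ((T :|: S) :\ c) (S :\ c)) => //.
- by move: card_S; rewrite (cardsD1 c S) cS => -[].
- move=> i; apply: leq_trans (card_T i); apply: subset_leq_card; apply/subsetP => j.
  rewrite !inE => /and3P [ij_notS ij_c /orP [//|ijS]].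
  by rewrite ij_c ijS in ij_notS.
- move=> t; rewrite in_setD1 negb_and negbK => /orP [/eqP -> //|]; exact: lam_TS.
Qed.

Lemma few_bad_rows rows TS :
  admissibly_free rows -> admissible (size rows).+1 TS ->
  exists B : {set row}, (#|F| * #|B| <= #|F| ^ #|{: col}|)%N /\
    forall v, v \notin B -> free_on (rcons rows v) (TS.1 :|: TS.2).
Proof.
move=> free_rows adm; set U := TS.1 :|: TS.2.
have codeword_rcons v lam : codeword (rcons rows v) lam -> codeword rows lam /\ orth lam v.
  move=> [lam_loc lam_rows]; split; last by apply: lam_rows; rewrite mem_rcons mem_head.
  by split=> // w w_rows; apply: lam_rows; rewrite mem_rcons inE w_rows orbT.
have [[lam0 [lam0_U lam0_cw] [c0 lam0_c0]]|no_dep] :=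
  classic (exists2 lam0, supported U lam0 /\ codeword rows lam0 & exists c0, lam0 c0 != 0);
  last first.
  exists set0; split=> [|v _ lam lam_U /codeword_rcons [lam_cw _] c]; first by rewrite cards0 muln0.
  by apply/eqP/negPn/negP => lam_c; apply: no_dep; exists lam => //; exists c.
exists (hyperplane lam0); split=> [|v v_notB lam lam_U /codeword_rcons [lam_cw lam_v]].
  exact: card_hyperplane lam0_c0.
have [c cS] : exists c, c \in TS.2.
  by apply/set0Pn; rewrite -card_gt0; case/and3P: adm => /eqP ->.
have lam0_c : lam0 c != 0.
  apply: contra lam0_c0 => /eqP lam0_c.
  by apply/eqP; apply: (codeword_vanish_at free_rows adm cS lam0_U lam0_cw lam0_c).
set k := lam c / lam0 c.
have lamE t : lam t = k * lam0 t.
  apply/eqP; rewrite -subr_eq0; apply/eqP; move: t.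
  apply: (codeword_vanish_at free_rows adm cS _ (codewordB k lam_cw lam0_cw)).
    by move=> t tU; rewrite lam_U // lam0_U // mulr0 subr0.
  by rewrite /k divfK // subrr.
have k0 : k = 0.
  move: lam_v; rewrite /orth (eq_bigr (fun t => k * (lam0 t * v t))) => [|t _]; last first.
    by rewrite lamE mulrA.
  rewrite -mulr_sumr => /eqP; rewrite mulf_eq0 => /orP [/eqP //|].
  by move: v_notB; rewrite inE => /negbTE ->.
by move=> t; rewrite lamE k0 mul0r.
Qed.

Lemma extend_admissibly_free rows :
  admissibly_free rows -> (#|[set TS | admissible (size rows).+1 TS]| < #|F|)%N ->
  exists v, admissibly_free (rcons rows v).
Proof.
move=> free_rows few.
have F_gt0 : (0 < #|F|)%N by apply/card_gt0P; exists 0.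
have /fin_all_exists [B HB] (TS : {set col} * {set col}) : exists B : {set row},
    admissible (size rows).+1 TS -> (#|F| * #|B| <= #|F| ^ #|{: col}|)%N /\
      forall v, v \notin B -> free_on (rcons rows v) (TS.1 :|: TS.2).
  have [adm|_] := boolP (admissible (size rows).+1 TS); last by exists set0.
  by have [B HB] := few_bad_rows free_rows adm; exists B.
set P := [set TS | admissible (size rows).+1 TS].
have [v v_good] : exists v, forall TS, TS \in P -> v \notin B TS.
  apply: exists_notin_bigcup; rewrite card_ffun -(ltn_pmul2l F_gt0) big_distrr /=.
  apply: (@leq_ltn_trans (\sum_(TS in P) #|F| ^ #|{: col}|)).
    by apply: leq_sum => TS; rewrite inE => /HB [].
  by rewrite sum_nat_const ltn_mul2r expn_gt0 F_gt0.
exists v => TS; rewrite size_rcons => adm.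
by apply: (HB TS adm).2; apply: v_good; rewrite inE.
Qed.

Lemma greedy_rows h :
  (forall j, (j < h)%N -> (#|[set TS | admissible j.+1 TS]| < #|F|)%N) ->
  exists rows, size rows = h /\ admissibly_free rows.
Proof.
elim: h => [_|h IH few].
  exists [::]; split=> // -[T S] /and3P [/eqP /cards0_eq /= S0 T_sub _] lam lam_U _ [i j].
  apply: lam_U; apply/negP; rewrite S0 setU0 => ijT.
  by have := subsetP T_sub _ ijT; rewrite /groups S0 imset0 in_setX in_set0.
have [rows [size_rows free_rows]] := IH (fun j lt_jh => few j (ltnW lt_jh)).
have [|v free_v] := extend_admissibly_free free_rows; first by rewrite size_rows; exact: few.
by exists (rcons rows v); rewrite size_rcons size_rows.
Qed.

Lemma card_admissible j :
  (#|[set TS | admissible j TS]| <= 'C(g * r, j) * 2 ^ (r * j))%N.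
Proof.
set Sj := [set S : {set col} | #|S| == j].
have sub : [set TS | admissible j TS] \subset
    \bigcup_(S in Sj) [set (T, S) | T in powerset (setX (groups S) [set: 'I_r])].
  apply/subsetP => -[T S]; rewrite inE => /and3P [card_S T_sub _].
  by apply/bigcupP; exists S; rewrite ?inE //; apply/imsetP; exists T; rewrite ?powersetE.
apply: leq_trans (subset_leq_card sub) _; apply: leq_trans (card_bigcup_le _ _) _.
apply: (@leq_trans (\sum_(S in Sj) 2 ^ (r * j))); last first.
  by rewrite sum_nat_const card_draws card_prod !card_ord.
apply: leq_sum => S; rewrite inE => /eqP card_S.
apply: leq_trans (leq_imset_card _ _) _.
rewrite card_powerset cardsX cardsT card_ord leq_exp2l // mulnC -card_S leq_mul2l.
by rewrite leq_imset_card orbT.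
Qed.

Lemma admissibly_free_MR_LRC rows : (0 < a <= r)%N -> admissibly_free rows ->
  is_MR_LRC (fun=> Vandermonde a x)
    (fun i => \matrix_(q < size rows, j < r) nth 0 rows q (i, j)).
Proof.
move=> a_range free_rows; split=> [i|T S card_T _ card_S lam lam_H]; first exact: Vandermonde_MDS.
pose lam' c := if c \in T :|: S then lam c else 0.
have lam'_supp : supported (T :|: S) lam' by move=> c /negbTE; rewrite /lam' => ->.
have sum_lam' (w : col -> F) : \sum_c lam' c * w c = \sum_(c in T :|: S) lam c * w c.
  by rewrite [RHS]big_mkcond; apply: eq_bigr => c _; rewrite /lam'; case: ifP; rewrite ?mul0r.
have lam'_cw : codeword rows lam'.
  split=> [i p|w w_rows]; rewrite /orth sum_lam'.
    rewrite -[RHS](lam_H (inl (i, p))); apply: eq_bigr => c _.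
    by rewrite /pcm /local_row; case: eqP; rewrite ?mxE.
  have lt_q : (index w rows < size rows)%N by rewrite index_mem.
  rewrite -[RHS](lam_H (inr (Ordinal lt_q))); apply: eq_bigr => -[i j] _.
  by rewrite /pcm mxE /= nth_index.
have slices i : (#|slice ((T :|: S) :\: S) i| <= a)%N.
  rewrite -(card_T i) -card_slice; apply: subset_leq_card; apply/subsetP => j.
  by rewrite !inE => /andP [/negbTE -> ]; rewrite orbF.
move=> c cTS; have := free_on_of_slices free_rows card_S slices lam'_supp lam'_cw c.
by rewrite /lam' cTS.
Qed.

Lemma exists_is_MR_LRC h : (0 < a <= r)%N ->
  (forall j, (j < h)%N -> ('C(g * r, j.+1) * 2 ^ (r * j.+1) < #|F|)%N) ->
  exists D : 'I_g -> 'M[F]_(h, r), is_MR_LRC (fun=> Vandermonde a x) D.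
Proof.
move=> a_range few.
have [rows [<- free_rows]] :=
  greedy_rows (fun j lt_jh => leq_ltn_trans (card_admissible j.+1) (few j lt_jh)).
by eexists; exact: admissibly_free_MR_LRC.
Qed.

End GreedyRows.

Section FieldPoints.
Local Open Scope ring_scope.

Lemma MR_LRC_of_field (F : finFieldType) (g r h a : nat) :
  (0 < a <= r)%N -> (r <= #|F|)%N ->
  (forall j, (j < h)%N -> ('C(g * r, j.+1) * 2 ^ (r * j.+1) < #|F|)%N) ->
  exists A D, @is_MR_LRC F g r h a A D.
Proof.
move=> a_range r_le_F few.
pose x : 'rV[F]_r := \row_j enum_val (widen_ord r_le_F j).
have x_inj : injective (x ord0).
  by move=> i j; rewrite !mxE => /enum_val_inj/(congr1 val) ij; apply: val_inj.
have [D HD] := exists_is_MR_LRC x_inj a_range few.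
by exists (fun=> Vandermonde a x), D.
Qed.

End FieldPoints.

Lemma MR_LRC_cube (a r m h : nat) :
  (0 < a <= r)%N -> (r %| m)%N -> (3 * 2 ^ r * r <= m)%N -> (2 * m ^ 2 <= h * r)%N ->
  (m ^ 3 %/ r * a + h < m ^ 3)%N ->
  exists F : finFieldType, (#|F| <= m ^ (2 * h))%N /\ MR_LRC F (m ^ 3) r h a.
Proof.
move=> a_range r_dvd_m m_ge hr_ge lt_n; case/andP: (a_range) => a_gt0 le_ar.
have r_gt0 : (0 < r)%N by apply: leq_trans le_ar.
have m3r : (3 * r <= m)%N.
  by apply: leq_trans m_ge; rewrite leq_mul2r leq_pmulr ?orbT // expn_gt0.
have m_gt0 : (0 < m)%N by lia.
have h_gt0 : (0 < h)%N.
  by rewrite lt0n; apply: contraTneq hr_ge => ->; rewrite mul0n -ltnNge muln_gt0 expn_gt0 m_gt0.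
set M := (m ^ (2 * h))%N.
have m_le_M : (m <= M)%N by rewrite -{1}(expn1 m) leq_pexp2l // muln_gt0 h_gt0.
set k := trunc_log 2 M.
have /andP [M_lo M_hi] : (2 ^ k <= M < 2 ^ k.+1)%N by apply: trunc_log_bounds; lia.
have k_gt0 : (0 < k)%N by rewrite trunc_log_gt0; lia.
have [F _ card_F] := @pPrimePowerField 2 k (erefl true) k_gt0.
exists F; split; first by rewrite card_F.
have r_dvd_n : (r %| m ^ 3)%N by apply: dvdn_exp.
have m_le_n : (m <= m ^ 3)%N by rewrite -{1}(expn1 m) leq_pexp2l.
split.
  by rewrite a_gt0 r_gt0 h_gt0 r_dvd_n lt_n divn_gt0 // (leq_trans _ m_le_n) //; lia.
apply: MR_LRC_of_field => // [|j lt_jh].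
  by rewrite card_F; move: M_hi; rewrite expnS; lia.
rewrite divnK // card_F.
have lt_h_n : (h < m ^ 3)%N by apply: leq_ltn_trans lt_n; apply: leq_addl.
have := bin_expn_le_half r_gt0 lt_jh lt_h_n hr_ge m_ge; rewrite -/M.
by move: M_hi; rewrite expnS; lia.
Qed.

Lemma Rpower_INR_cube (m : nat) (y : R) : (0 < m)%N ->
  Rpower (INR (m ^ 3)) y = Rpower (INR m) (3 * y).
Proof.
move=> m_gt0; have m_pos : (0 < INR m)%R by apply: lt_0_INR; lia.
rewrite INR_expn -Rpower_pow // Rpower_mult; congr Rpower; rewrite /=; lra.
Qed.

Lemma sq_le_of_Rpower_le (m x : nat) (eps : R) : (0 < m)%N -> (0 < eps < 1 / 2)%R ->
  (Rpower (INR (m ^ 3)) (2 / 3) / eps <= INR x)%R -> (2 * m ^ 2 <= x)%N.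
Proof.
move=> m_gt0 [eps_gt0 eps_lt] le_x.
have m_pos : (0 < INR m)%R by apply: lt_0_INR; lia.
have m2_pos : (0 < INR m ^ 2)%R by apply: pow_lt.
rewrite Rpower_INR_cube // in le_x.
have two_thirds : (3 * (2 / 3) = INR 2)%R by rewrite /=; lra.
rewrite two_thirds Rpower_pow // in le_x.
apply/leP/INR_le; rewrite mult_INR INR_expn.
have : (2 < 1 / eps)%R.
  by apply: (Rmult_lt_reg_r eps) => //; rewrite /Rdiv Rmult_1_l Rinv_l; lra.
rewrite /Rdiv in le_x * => inv_eps; rewrite /=; nra.
Qed.

Lemma INR_le_Rpower_cube (q m h : nat) (eps : R) : (0 < m)%N -> (0 <= eps)%R ->
  (q <= m ^ (2 * h))%N -> (INR q <= Rpower (INR (m ^ 3)) (2 * INR h / 3 * (1 + eps)))%R.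
Proof.
move=> m_gt0 eps_ge0 le_q.
have m_pos : (0 < INR m)%R by apply: lt_0_INR; lia.
apply: (Rle_trans _ (INR (m ^ (2 * h)))); first exact/le_INR/leP.
rewrite INR_expn -Rpower_pow // Rpower_INR_cube //.
apply: Rle_Rpower; first by apply: (le_INR 1); apply/leP.
rewrite mult_INR /=; have := pos_INR h; nra.
Qed.

Theorem theorem4p3 :
  exists c1 c2 : R, (0 < c1)%R /\ (0 < c2)%R /\
  forall a r : nat, (0 < a)%N -> (a <= r)%N ->
  forall N : nat, exists n : nat,
    (N <= n)%N /\ (r %| n)%N /\
    (Rpower (INR r) (c1 * INR r) <= INR n)%R /\
    forall (eps : R) (h : nat),
      (0 < eps)%R -> (eps < 1 / 2)%R -> (0 < h)%N ->
      (c2 * Rpower (INR n) (2 / 3) / eps <= INR (h * r))%R ->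
      (n %/ r * a + h < n)%N ->
      exists F : finFieldType,
        (INR #|F| <= Rpower (INR n) (2 * INR h / 3 * (1 + eps)))%R /\
        MR_LRC F n r h a.
Proof.
exists 1%R, 1%R; split; first lra; split; first lra.
move=> a r a_gt0 le_ar N.
have r_gt0 : (0 < r)%N by apply: leq_trans le_ar.
set t := (N + r ^ r + 3 * 2 ^ r).+1; set m := (r * t)%N.
have t_le_m : (t <= m)%N by rewrite leq_pmull.
have m_gt0 : (0 < m)%N by apply: leq_trans t_le_m.
have m_le_n : (m <= m ^ 3)%N by rewrite -{1}(expn1 m) leq_pexp2l.
exists (m ^ 3); split; [|split; [|split]].
- by apply: leq_trans m_le_n; lia.
- by apply: dvdn_exp; rewrite ?dvdn_mulr.
- rewrite Rmult_1_l Rpower_pow; last by apply: lt_0_INR; lia.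
  by rewrite -INR_expn; apply/le_INR/leP; apply: leq_trans m_le_n; lia.
move=> eps h eps_gt0 eps_lt _; rewrite Rmult_1_l => hr_ge lt_n.
have m_ge : (3 * 2 ^ r * r <= m)%N by rewrite /m mulnC leq_mul2l; apply/orP; right; lia.
have hr := sq_le_of_Rpower_le m_gt0 (conj eps_gt0 eps_lt) hr_ge.
have a_range : (0 < a <= r)%N by rewrite a_gt0.
have [F [card_F MR_F]] := MR_LRC_cube a_range (dvdn_mulr t (dvdnn r)) m_ge hr lt_n.
by exists F; split => //; apply: INR_le_Rpower_cube => //; lra.
Qed.
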